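(* The set of axioms $\mathrm{Md}\cup\mathrm{Signs}\cup\mathrm{SquareRoots}$ is a complete axiomatisation of $\mathrm{Mod}_{\Sigma_{mss}}(\mathrm{Md}\cup\mathrm{Signs}\cup\mathrm{SquareRoots}\cup\mathrm{IL})$. That is, an equation between $\Sigma_{mss}$-terms holds in every $\Sigma_{mss}$-algebra satisfying $\mathrm{Md}\cup\mathrm{Signs}\cup\mathrm{SquareRoots}\cup\mathrm{IL}$ if and only if it is derivable in equational logic from $\mathrm{Md}\cup\mathrm{Signs}\cup\mathrm{SquareRoots}$.
   Context: The signature is $\Sigma_{mss}=(0,1,+,\cdot,-,{}^{-1},\mathbf{s},\mathrm{ssqrt})$. Here $\mathbf{s}$ is a unary sign function and $\mathrm{ssqrt}$ is a unary ''signed square root'' operation (written in the paper with a special square-root symbol). $\mathrm{ssqrt}$ is intended to be the principal square root on nonnegative numbers, with $\mathrm{ssqrt}(x)=-\mathrm{ssqrt}(-x)$ for $x<0$. Abbreviations: $1_t$ stands for $t\cdot t^{-1}$ and $0_t$ stands for $1-1_t$. $\mathrm{Md}$ is the set of meadow axioms: - $(x+y)+z=x+(y+z)$, $x+y=y+x$, $x+0=x$, $x+(-x)=0$; - $(x\cdot y)\cdot z=x\cdot(y\cdot z)$, $x\cdot y=y\cdot x$, $1\cdot x=x$; - $x\cdot(y+z)=x\cdot y+x\cdot z$; - $(x^{-1})^{-1}=x$, $x\cdot(x\cdot x^{-1})=x$. $\mathrm{Signs}$ is the set of axioms: - $\mathbf{s}(1_x)=1_x$, $\mathbf{s}(0_x)=0_x$,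 $\mathbf{s}(-1)=-1$; - $\mathbf{s}(x^{-1})=\mathbf{s}(x)$, $\mathbf{s}(x\cdot y)=\mathbf{s}(x)\cdot\mathbf{s}(y)$; - $0_{\mathbf{s}(x)-\mathbf{s}(y)}\cdot(\mathbf{s}(x+y)-\mathbf{s}(x))=0$. $\mathrm{SquareRoots}$ is the set of axioms: - $\mathrm{ssqrt}(x^{-1})=(\mathrm{ssqrt}(x))^{-1}$; - $\mathrm{ssqrt}(x\cdot y)=\mathrm{ssqrt}(x)\cdot\mathrm{ssqrt}(y)$; - $\mathrm{ssqrt}(x\cdot x\cdot\mathbf{s}(x))=x$; - $\mathbf{s}(\mathrm{ssqrt}(x)-\mathrm{ssqrt}(y))=\mathbf{s}(x-y)$. $\mathrm{IL}$ (Inverse Law) is the conditional axiom $x\neq 0\rightarrow x\cdot x^{-1}=1$. $\mathrm{Mod}_\Sigma(T)$ denotes the class of all $\Sigma$-algebras satisfying $T$. *)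

Inductive term : Type :=
| Var   : nat -> term
| TZero : term
| TOne  : term
| TAdd  : term -> term -> term
| TMul  : term -> term -> term
| TNeg  : term -> term
| TInv  : term -> term
| TSgn  : term -> term
| TSqrt : term -> term.

Record mss_algebra : Type := MkAlg {
  car  : Type;
  zero : car;
  one  : car;
  add  : car -> car -> car;
  mul  : car -> car -> car;
  opp  : car -> car;
  inv  : car -> car;
  sgn  : car -> car;
  ssqrt : car -> car
}.

Fixpoint eval (A : mss_algebra) (env : nat -> car A) (t : term) : car A :=
  match t with
  | Var n => env n
  | TZero => zero A
  | TOne => one A
  | TAdd a b => add A (eval A env a) (eval A env b)
  | TMul a b => mul A (eval A env a) (eval A env b)
  | TNeg a => opp A (eval A env a)
  | TInv a => inv A (eval A env a)
  | TSgn a => sgn A (eval A env a)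
  | TSqrt a => ssqrt A (eval A env a)
  end.

Fixpoint subst (s : nat -> term) (t : term) : term :=
  match t with
  | Var n => s n
  | TZero => TZero
  | TOne => TOne
  | TAdd a b => TAdd (subst s a) (subst s b)
  | TMul a b => TMul (subst s a) (subst s b)
  | TNeg a => TNeg (subst s a)
  | TInv a => TInv (subst s a)
  | TSgn a => TSgn (subst s a)
  | TSqrt a => TSqrt (subst s a)
  end.

Definition vx : term := Var 0.
Definition vy : term := Var 1.
Definition vz : term := Var 2.

Definition tsub (t u : term) : term := TAdd t (TNeg u).
Definition one_ (t : term) : term := TMul t (TInv t).
Definition zero_ (t : term) : term := tsub TOne (one_ t).

Inductive MdSignsSqrt : term -> term -> Prop :=
| md_addA : MdSignsSqrt (TAdd (TAdd vx vy) vz) (TAdd vx (TAdd vy vz))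
| md_addC : MdSignsSqrt (TAdd vx vy) (TAdd vy vx)
| md_add0 : MdSignsSqrt (TAdd vx TZero) vx
| md_addN : MdSignsSqrt (TAdd vx (TNeg vx)) TZero
| md_mulA : MdSignsSqrt (TMul (TMul vx vy) vz) (TMul vx (TMul vy vz))
| md_mulC : MdSignsSqrt (TMul vx vy) (TMul vy vx)
| md_mul1 : MdSignsSqrt (TMul TOne vx) vx
| md_mulD : MdSignsSqrt (TMul vx (TAdd vy vz)) (TAdd (TMul vx vy) (TMul vx vz))
| md_invK : MdSignsSqrt (TInv (TInv vx)) vx
| md_ril  : MdSignsSqrt (TMul vx (TMul vx (TInv vx))) vx
| sg_one  : MdSignsSqrt (TSgn (one_ vx)) (one_ vx)
| sg_zero : MdSignsSqrt (TSgn (zero_ vx)) (zero_ vx)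
| sg_m1   : MdSignsSqrt (TSgn (TNeg TOne)) (TNeg TOne)
| sg_inv  : MdSignsSqrt (TSgn (TInv vx)) (TSgn vx)
| sg_mul  : MdSignsSqrt (TSgn (TMul vx vy)) (TMul (TSgn vx) (TSgn vy))
| sg_add  : MdSignsSqrt
              (TMul (zero_ (tsub (TSgn vx) (TSgn vy)))
                    (tsub (TSgn (TAdd vx vy)) (TSgn vx)))
              TZero
| sq_inv  : MdSignsSqrt (TSqrt (TInv vx)) (TInv (TSqrt vx))
| sq_mul  : MdSignsSqrt (TSqrt (TMul vx vy)) (TMul (TSqrt vx) (TSqrt vy))
| sq_sq   : MdSignsSqrt (TSqrt (TMul (TMul vx vx) (TSgn vx))) vx
| sq_mono : MdSignsSqrt (TSgn (tsub (TSqrt vx) (TSqrt vy))) (TSgn (tsub vx vy)).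

Definition sat_eq (A : mss_algebra) (t u : term) : Prop :=
  forall env : nat -> car A, eval A env t = eval A env u.

Definition IL (A : mss_algebra) : Prop :=
  forall a : car A, a <> zero A -> mul A a (inv A a) = one A.

Definition model_MSS_IL (A : mss_algebra) : Prop :=
  (forall l r, MdSignsSqrt l r -> sat_eq A l r) /\ IL A.

Inductive derivable (E : term -> term -> Prop) : term -> term -> Prop :=
| d_ax    : forall l r (s : nat -> term), E l r -> derivable E (subst s l) (subst s r)
| d_refl  : forall t, derivable E t t
| d_sym   : forall t u, derivable E t u -> derivable E u t
| d_trans : forall t u v, derivable E t u -> derivable E u v -> derivable E t v
| d_add   : forall t t' u u', derivable E t t' -> derivable E u u' ->
              derivable E (TAdd t u) (TAdd t' u')
| d_mul   : forall t t' u u', derivable E t t' -> derivable E u u' ->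
              derivable E (TMul t u) (TMul t' u')
| d_neg   : forall t t', derivable E t t' -> derivable E (TNeg t) (TNeg t')
| d_inv   : forall t t', derivable E t t' -> derivable E (TInv t) (TInv t')
| d_sgn   : forall t t', derivable E t t' -> derivable E (TSgn t) (TSgn t')
| d_sqrt  : forall t t', derivable E t t' -> derivable E (TSqrt t) (TSqrt t').

From Stdlib Require Import FunctionalExtensionality PropExtensionality ProofIrrelevance.
From Stdlib Require Import ClassicalEpsilon Classical Cantor Ring Lia.

(* For completeness, suppose t = u is not derivable, so
   that d := [t] - [u] is nonzero in the countable term model A modulo
   derivability. Every operation of the signature commutes with multiplication
   by an idempotent e: f (x e) = f x e. Enumerating A as x_0, x_1, ..., build
   nonzero idempotents c_0 = 1_d, c_(n+1) = c_n (1 - 1_(x_n)) if this is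
   nonzero and c_n 1_(x_n) otherwise, and identify x and y when
   (x - y) c_n = 0 for some n. This is a congruence, so the quotient still
   satisfies Md, Signs and SquareRoots; it satisfies IL because each x_n is
   either killed by c_(n+1) or has 1_(x_n) c_(n+1) = c_(n+1); and d survives,
   since d c_n = 0 would give c_n = 1_d c_n = 0. *)

Record congruence (A : mss_algebra) (R : car A -> car A -> Prop) : Prop := {
  congr_refl : forall x, R x x;
  congr_sym : forall x y, R x y -> R y x;
  congr_trans : forall x y z, R x y -> R y z -> R x z;
  congr_add : forall x x' y y', R x x' -> R y y' -> R (add A x y) (add A x' y');
  congr_mul : forall x x' y y', R x x' -> R y y' -> R (mul A x y) (mul A x' y');
  congr_opp : forall x x', R x x' -> R (opp A x) (opp A x');
  congr_inv : forall x x', R x x' -> R (inv A x) (inv A x');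
  congr_sgn : forall x x', R x x' -> R (sgn A x) (sgn A x');
  congr_ssqrt : forall x x', R x x' -> R (ssqrt A x) (ssqrt A x')
}.

(** * Quotient algebras *)

Section Quotient.
Variable A : mss_algebra.
Variable R : car A -> car A -> Prop.
Hypothesis HR : congruence A R.

Definition quot_car : Type := {P : car A -> Prop | exists x, P = R x}.

Definition pi (x : car A) : quot_car := exist _ (R x) (ex_intro _ x eq_refl).

Definition repr (q : quot_car) : car A :=
  proj1_sig (constructive_indefinite_description _ (proj2_sig q)).

Lemma pi_repr q : pi (repr q) = q.
Proof.
  destruct q as [P HP]; unfold repr; simpl.
  destruct (constructive_indefinite_description _ HP) as [x Hx]; simpl.
  apply eq_sig_hprop; [intros; apply proof_irrelevance|]. symmetry. exact Hx.
Qed.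

Lemma pi_eq x y : pi x = pi y <-> R x y.
Proof.
  split.
  - intro E. apply (f_equal (@proj1_sig _ _)) in E. simpl in E.
    rewrite E. apply (congr_refl _ _ HR).
  - intro Rxy. apply eq_sig_hprop; [intros; apply proof_irrelevance|]. simpl.
    extensionality z. apply propositional_extensionality. split; intro Rz.
    + apply (congr_trans _ _ HR) with x; [apply (congr_sym _ _ HR)|]; assumption.
    + apply (congr_trans _ _ HR) with y; assumption.
Qed.

Lemma R_repr_pi x : R (repr (pi x)) x.
Proof. apply pi_eq, pi_repr. Qed.

Definition quot : mss_algebra :=
  MkAlg quot_car (pi (zero A)) (pi (one A))
    (fun a b => pi (add A (repr a) (repr b)))
    (fun a b => pi (mul A (repr a) (repr b)))
    (fun a => pi (opp A (repr a)))
    (fun a => pi (inv A (repr a)))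
    (fun a => pi (sgn A (repr a)))
    (fun a => pi (ssqrt A (repr a))).

Lemma eval_pi env t : eval quot (fun n => pi (env n)) t = pi (eval A env t).
Proof.
  pose proof (R_repr_pi) as Rr.
  induction t; simpl; try reflexivity;
    [rewrite IHt1, IHt2; apply pi_eq; apply (congr_add _ _ HR); apply Rr
    |rewrite IHt1, IHt2; apply pi_eq; apply (congr_mul _ _ HR); apply Rr
    |rewrite IHt; apply pi_eq; apply (congr_opp _ _ HR); apply Rr
    |rewrite IHt; apply pi_eq; apply (congr_inv _ _ HR); apply Rr
    |rewrite IHt; apply pi_eq; apply (congr_sgn _ _ HR); apply Rr
    |rewrite IHt; apply pi_eq; apply (congr_ssqrt _ _ HR); apply Rr].
Qed.

Lemma sat_eq_quot l r : (forall env, R (eval A env l) (eval A env r)) -> sat_eq quot l r.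
Proof.
  intros H env.
  replace env with (fun n => pi (repr (env n)))
    by (extensionality n; apply pi_repr).
  rewrite !eval_pi. apply pi_eq, H.
Qed.

End Quotient.

Lemma eval_subst A env s t :
  eval A env (subst s t) = eval A (fun n => eval A env (s n)) t.
Proof. induction t; simpl; congruence. Qed.

Lemma derivable_sound t u : derivable MdSignsSqrt t u ->
  forall A, model_MSS_IL A -> sat_eq A t u.
Proof.
  intros D A [HA _]. induction D; intro env; simpl;
    repeat match goal with IH : sat_eq A _ _ |- _ => rewrite (IH env); clear IH end;
    try reflexivity.
  rewrite !eval_subst. apply HA; assumption.
Qed.

(** * The term model *)

Definition term_alg : mss_algebra := MkAlg term TZero TOne TAdd TMul TNeg TInv TSgn TSqrt.

Lemma eval_term_alg s t : eval term_alg s t = subst s t.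
Proof. induction t; simpl; congruence. Qed.

Lemma subst_Var t : subst Var t = t.
Proof. induction t; simpl; congruence. Qed.

Lemma congruence_derivable : congruence term_alg (derivable MdSignsSqrt).
Proof.
  constructor; simpl; intros;
    eauto using derivable.
Qed.

Definition free_alg : mss_algebra := quot term_alg (derivable MdSignsSqrt).

Definition free_pi : term -> car free_alg := pi term_alg (derivable MdSignsSqrt).

Lemma free_alg_axioms l r : MdSignsSqrt l r -> sat_eq free_alg l r.
Proof.
  intro H. apply (sat_eq_quot _ _ congruence_derivable). intro env.
  rewrite !eval_term_alg. apply d_ax, H.
Qed.

Lemma eval_free_alg_generic t : eval free_alg (fun n => free_pi (Var n)) t = free_pi t.
Proof.
  unfold free_pi. rewrite (eval_pi _ _ congruence_derivable).
  simpl. rewrite eval_term_alg, subst_Var. reflexivity.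
Qed.

Lemma free_pi_eq t u : free_pi t = free_pi u <-> derivable MdSignsSqrt t u.
Proof. apply (pi_eq _ _ congruence_derivable). Qed.

Section Model.
Variable A : mss_algebra.
Hypothesis HA : forall l r, MdSignsSqrt l r -> sat_eq A l r.

Local Notation "x ⊕ y" := (add A x y) (at level 50, left associativity).
Local Notation "x ⊗ y" := (mul A x y) (at level 40, left associativity).
Local Notation "⊖ x" := (opp A x) (at level 35).
Local Notation "x ⁻¹" := (inv A x) (at level 30).
Local Notation O := (zero A).
Local Notation I := (one A).

Definition env3 (x y z : car A) : nat -> car A :=
  fun n => match n with 0 => x | 1 => y | _ => z end.

Lemma addC x y : x ⊕ y = y ⊕ x.
Proof. exact (HA _ _ md_addC (env3 x y x)). Qed.
Lemma addA x y z : x ⊕ y ⊕ z = x ⊕ (y ⊕ z).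
Proof. exact (HA _ _ md_addA (env3 x y z)). Qed.
Lemma add0 x : x ⊕ O = x.
Proof. exact (HA _ _ md_add0 (env3 x x x)). Qed.
Lemma addN x : x ⊕ ⊖ x = O.
Proof. exact (HA _ _ md_addN (env3 x x x)). Qed.
Lemma mulC x y : x ⊗ y = y ⊗ x.
Proof. exact (HA _ _ md_mulC (env3 x y x)). Qed.
Lemma mulA x y z : x ⊗ y ⊗ z = x ⊗ (y ⊗ z).
Proof. exact (HA _ _ md_mulA (env3 x y z)). Qed.
Lemma mul1 x : I ⊗ x = x.
Proof. exact (HA _ _ md_mul1 (env3 x x x)). Qed.
Lemma mulDr x y z : x ⊗ (y ⊕ z) = x ⊗ y ⊕ x ⊗ z.
Proof. exact (HA _ _ md_mulD (env3 x y z)). Qed.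
Lemma invK x : x ⁻¹ ⁻¹ = x.
Proof. exact (HA _ _ md_invK (env3 x x x)). Qed.
Lemma mul_mulV x : x ⊗ (x ⊗ x ⁻¹) = x.
Proof. exact (HA _ _ md_ril (env3 x x x)). Qed.
Lemma sgn_mul x y : sgn A (x ⊗ y) = sgn A x ⊗ sgn A y.
Proof. exact (HA _ _ sg_mul (env3 x y x)). Qed.
Lemma ssqrt_mul x y : ssqrt A (x ⊗ y) = ssqrt A x ⊗ ssqrt A y.
Proof. exact (HA _ _ sq_mul (env3 x y x)). Qed.

Lemma model_ring : ring_theory O I (add A) (mul A) (fun x y => x ⊕ ⊖ y) (opp A) eq.
Proof.
  constructor; intros.
  - rewrite addC. apply add0.
  - apply addC.
  - symmetry. apply addA.
  - apply mul1.
  - apply mulC.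
  - symmetry. apply mulA.
  - rewrite mulC, mulDr, (mulC z x), (mulC z y). reflexivity.
  - reflexivity.
  - apply addN.
Qed.

Add Ring model_ring : model_ring.

Lemma subr0_eq x y : x ⊕ ⊖ y = O -> x = y.
Proof. intro H. transitivity ((x ⊕ ⊖ y) ⊕ y); [ring|]. rewrite H. ring. Qed.

(* [x⁻¹] is a quasi-inverse of [x] (x y x = x and y x y = y), and in a
   commutative ring quasi-inverses are unique. *)
Lemma inv_unique x y : x ⊗ y ⊗ x = x -> y ⊗ x ⊗ y = y -> y = x ⁻¹.
Proof.
  intros Hxy Hyx. set (z := x ⁻¹).
  assert (Hxz : x ⊗ z ⊗ x = x) by (transitivity (x ⊗ (x ⊗ z)); [ring|apply mul_mulV]).
  assert (Hzx : z ⊗ x ⊗ z = z)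
    by (transitivity (z ⊗ (z ⊗ z ⁻¹)); [unfold z; rewrite invK; ring|apply mul_mulV]).
  assert (Exy : x ⊗ y = x ⊗ y ⊗ (x ⊗ z)).
  { transitivity (x ⊗ z ⊗ x ⊗ y); [rewrite Hxz; reflexivity|ring]. }
  assert (Exz : x ⊗ z = x ⊗ y ⊗ (x ⊗ z)).
  { transitivity (x ⊗ y ⊗ x ⊗ z); [rewrite Hxy; reflexivity|ring]. }
  assert (Eyz : x ⊗ y = x ⊗ z) by congruence.
  transitivity (y ⊗ (x ⊗ y)); [rewrite <- Hyx at 1; ring|].
  rewrite Eyz.
  transitivity (z ⊗ (x ⊗ y)); [ring|].
  rewrite Eyz. transitivity (z ⊗ x ⊗ z); [ring|exact Hzx].
Qed.

Lemma inv_mul x y : (x ⊗ y) ⁻¹ = x ⁻¹ ⊗ y ⁻¹.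
Proof.
  pose proof (mul_mulV x). pose proof (mul_mulV y).
  pose proof (mul_mulV (x ⁻¹)). pose proof (mul_mulV (y ⁻¹)). rewrite invK in *.
  symmetry. apply inv_unique.
  - transitivity (x ⊗ (x ⊗ x ⁻¹) ⊗ (y ⊗ (y ⊗ y ⁻¹))); [ring|congruence].
  - transitivity (x ⁻¹ ⊗ (x ⁻¹ ⊗ x) ⊗ (y ⁻¹ ⊗ (y ⁻¹ ⊗ y))); [ring|congruence].
Qed.

Definition one_of (x : car A) : car A := x ⊗ x ⁻¹.

Lemma one_of_idem x : one_of x ⊗ one_of x = one_of x.
Proof.
  unfold one_of. transitivity (x ⊗ (x ⊗ x ⁻¹) ⊗ x ⁻¹); [ring|]. rewrite mul_mulV. reflexivity.
Qed.

Lemma inv_idem e : e ⊗ e = e -> e ⁻¹ = e.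
Proof. intro He. symmetry. apply inv_unique; rewrite He; exact He. Qed.

Lemma sgn_idem e : e ⊗ e = e -> sgn A e = e.
Proof.
  intro He. pose proof (HA _ _ sg_one (env3 e e e)) as H. simpl in H.
  rewrite (inv_idem e He), He in H. exact H.
Qed.

Lemma ssqrt_idem e : e ⊗ e = e -> ssqrt A e = e.
Proof.
  intro He. pose proof (HA _ _ sq_sq (env3 e e e)) as H. simpl in H.
  rewrite (sgn_idem e He), !He in H. exact H.
Qed.

Definition idem_compatible (f : car A -> car A) : Prop :=
  forall x e, e ⊗ e = e -> f (x ⊗ e) = f x ⊗ e.

Lemma opp_idem_compatible : idem_compatible (opp A).
Proof. intros x e _. ring. Qed.

Lemma inv_idem_compatible : idem_compatible (inv A).
Proof. intros x e He. rewrite inv_mul, (inv_idem e He). reflexivity. Qed.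

Lemma sgn_idem_compatible : idem_compatible (sgn A).
Proof. intros x e He. rewrite sgn_mul, (sgn_idem e He). reflexivity. Qed.

Lemma ssqrt_idem_compatible : idem_compatible (ssqrt A).
Proof. intros x e He. rewrite ssqrt_mul, (ssqrt_idem e He). reflexivity. Qed.

(** * Forcing the inverse law *)

Section Chain.
Variable enum : nat -> car A.
Hypothesis enum_surj : forall x, exists n, enum n = x.
Variable d : car A.
Hypothesis d_neq0 : d <> O.

Fixpoint chain (n : nat) : car A :=
  match n with
  | 0 => one_of d
  | S n =>
      if excluded_middle_informative (chain n ⊗ (I ⊕ ⊖ one_of (enum n)) <> O)
      then chain n ⊗ (I ⊕ ⊖ one_of (enum n))
      else chain n ⊗ one_of (enum n)
  end.

Lemma chain_S n :
  (chain (S n) = chain n ⊗ (I ⊕ ⊖ one_of (enum n)) /\ chain (S n) <> O) \/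
  (chain (S n) = chain n ⊗ one_of (enum n) /\ chain n ⊗ (I ⊕ ⊖ one_of (enum n)) = O).
Proof.
  simpl. destruct (excluded_middle_informative _) as [H|H]; [left|right];
    split; auto; apply NNPP, H.
Qed.

Lemma chain_idem n : chain n ⊗ chain n = chain n.
Proof.
  induction n as [|n IH]; [apply one_of_idem|].
  pose proof (one_of_idem (enum n)) as Hp.
  destruct (chain_S n) as [[-> _]|[-> _]].
  - transitivity (chain n ⊗ chain n ⊗
      (I ⊕ ⊖ one_of (enum n) ⊕ ⊖ one_of (enum n) ⊕ one_of (enum n) ⊗ one_of (enum n)));
      [ring|].
    rewrite IH, Hp. ring.
  - transitivity (chain n ⊗ chain n ⊗ (one_of (enum n) ⊗ one_of (enum n))); [ring|].
    rewrite IH, Hp. reflexivity.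
Qed.

Lemma chain_neq0 n : chain n <> O.
Proof.
  induction n as [|n IH].
  - intro H. apply d_neq0. rewrite <- (mul_mulV d). simpl in H. unfold one_of in H.
    rewrite H. ring.
  - destruct (chain_S n) as [[_ H]|[E H]]; [exact H|].
    intro E0. apply IH.
    transitivity (chain n ⊗ (I ⊕ ⊖ one_of (enum n)) ⊕ chain n ⊗ one_of (enum n)); [ring|].
    rewrite H, <- E, E0. ring.
Qed.

Lemma chain_dvd n k : n <= k -> exists w, chain k = chain n ⊗ w.
Proof.
  induction 1 as [|k _ [w Hw]]; [exists I; ring|].
  destruct (chain_S k) as [[-> _]|[-> _]]; rewrite Hw.
  - exists (w ⊗ (I ⊕ ⊖ one_of (enum k))). ring.
  - exists (w ⊗ one_of (enum k)). ring.
Qed.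

Lemma chain_annihilates_up a n k : a ⊗ chain n = O -> n <= k -> a ⊗ chain k = O.
Proof.
  intros H Hk. destruct (chain_dvd n k Hk) as [w ->].
  transitivity (a ⊗ chain n ⊗ w); [ring|]. rewrite H. ring.
Qed.

Definition chain_eq (x y : car A) : Prop := exists n, (x ⊕ ⊖ y) ⊗ chain n = O.

Lemma chain_eq_max x x' y y' :
  chain_eq x x' -> chain_eq y y' -> exists n,
    (x ⊕ ⊖ x') ⊗ chain n = O /\ (y ⊕ ⊖ y') ⊗ chain n = O.
Proof.
  intros [n Hn] [m Hm]. exists (max n m).
  split; eapply chain_annihilates_up; eauto; lia.
Qed.

Lemma chain_eq_compatible f :
  idem_compatible f -> forall x y, chain_eq x y -> chain_eq (f x) (f y).
Proof.
  intros Hf x y [n Hn]. exists n.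
  assert (E : x ⊗ chain n = y ⊗ chain n).
  { apply subr0_eq. rewrite <- Hn. ring. }
  transitivity (f x ⊗ chain n ⊕ ⊖ (f y ⊗ chain n)); [ring|].
  rewrite <- !Hf, E by apply chain_idem. ring.
Qed.

Lemma congruence_chain_eq : congruence A chain_eq.
Proof.
  constructor.
  - intro x. exists 0. ring.
  - intros x y [n Hn]. exists n.
    transitivity (⊖ ((x ⊕ ⊖ y) ⊗ chain n)); [ring|]. rewrite Hn. ring.
  - intros x y z Hxy Hyz. destruct (chain_eq_max _ _ _ _ Hxy Hyz) as [n [Hn Hm]].
    exists n. transitivity ((x ⊕ ⊖ y) ⊗ chain n ⊕ (y ⊕ ⊖ z) ⊗ chain n); [ring|].
    rewrite Hn, Hm. ring.
  - intros x x' y y' Hx Hy. destruct (chain_eq_max _ _ _ _ Hx Hy) as [n [Hn Hm]].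
    exists n. transitivity ((x ⊕ ⊖ x') ⊗ chain n ⊕ (y ⊕ ⊖ y') ⊗ chain n); [ring|].
    rewrite Hn, Hm. ring.
  - intros x x' y y' Hx Hy. destruct (chain_eq_max _ _ _ _ Hx Hy) as [n [Hn Hm]].
    exists n. transitivity (y ⊗ ((x ⊕ ⊖ x') ⊗ chain n) ⊕ x' ⊗ ((y ⊕ ⊖ y') ⊗ chain n));
      [ring|].
    rewrite Hn, Hm. ring.
  - apply chain_eq_compatible, opp_idem_compatible.
  - apply chain_eq_compatible, inv_idem_compatible.
  - apply chain_eq_compatible, sgn_idem_compatible.
  - apply chain_eq_compatible, ssqrt_idem_compatible.
Qed.

Definition chain_quot : mss_algebra := quot A chain_eq.

Local Notation cpi := (pi A chain_eq).

(* The step of [chain] at index [n] with [enum n = x] either kills [x] or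
   makes [1_x] act as the identity. *)
Lemma chain_eq_dichotomy x : chain_eq x O \/ chain_eq (one_of x) I.
Proof.
  destruct (enum_surj x) as [n <-].
  destruct (chain_S n) as [[E _]|[E _]]; [left|right]; exists (S n); rewrite E; unfold one_of.
  - transitivity (chain n ⊗ (enum n ⊕ ⊖ (enum n ⊗ (enum n ⊗ (enum n) ⁻¹)))); [ring|].
    rewrite mul_mulV. ring.
  - pose proof (one_of_idem (enum n)) as Hp. unfold one_of in Hp.
    transitivity (chain n ⊗ (enum n ⊗ (enum n) ⁻¹ ⊗ (enum n ⊗ (enum n) ⁻¹)
                             ⊕ ⊖ (enum n ⊗ (enum n) ⁻¹))); [ring|].
    rewrite Hp. ring.
Qed.

Lemma chain_quot_model : model_MSS_IL chain_quot.
Proof.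
  split.
  - intros l r H. apply (sat_eq_quot _ _ congruence_chain_eq). intro env.
    rewrite (HA _ _ H env). apply (congr_refl _ _ congruence_chain_eq).
  - intros a Ha. rewrite <- (pi_repr _ _ a) in *. set (x := repr A chain_eq a) in *.
    pose proof (R_repr_pi _ _ congruence_chain_eq) as Rr.
    simpl. apply (pi_eq _ _ congruence_chain_eq).
    apply (congr_trans _ _ congruence_chain_eq) with (one_of x).
    { apply (congr_mul _ _ congruence_chain_eq); [apply Rr|].
      apply (congr_trans _ _ congruence_chain_eq) with (inv A (repr A chain_eq (cpi x)));
        [apply Rr|].
      apply (congr_inv _ _ congruence_chain_eq), Rr. }
    destruct (chain_eq_dichotomy x) as [H|H]; [|exact H].
    exfalso. apply Ha. apply (pi_eq _ _ congruence_chain_eq), H.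
Qed.

Lemma chain_quot_separates x y : x ⊕ ⊖ y = d -> cpi x <> cpi y.
Proof.
  intros Hxy E. apply (pi_eq _ _ congruence_chain_eq) in E. destruct E as [n Hn].
  rewrite Hxy in Hn. apply (chain_neq0 n).
  destruct (chain_dvd 0 n ltac:(lia)) as [w Hw]. simpl in Hw. unfold one_of in Hw.
  rewrite Hw in *.
  transitivity (d ⁻¹ ⊗ (d ⊗ (d ⊗ d ⁻¹) ⊗ w)); [rewrite mul_mulV; ring|].
  transitivity (d ⁻¹ ⊗ (d ⊗ (d ⊗ d ⁻¹ ⊗ w))); [ring|].
  rewrite Hn. ring.
Qed.

End Chain.
End Model.

(** * Countability of terms *)

Fixpoint decode (fuel n : nat) : term :=
  match fuel with
  | 0 => TZero
  | S fuel =>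
    let (tag, p) := Cantor.of_nat n in
    let (a, b) := Cantor.of_nat p in
    match tag with
    | 0 => Var p
    | 1 => TZero
    | 2 => TOne
    | 3 => TAdd (decode fuel a) (decode fuel b)
    | 4 => TMul (decode fuel a) (decode fuel b)
    | 5 => TNeg (decode fuel p)
    | 6 => TInv (decode fuel p)
    | 7 => TSgn (decode fuel p)
    | _ => TSqrt (decode fuel p)
    end
  end.

Fixpoint encode (t : term) : nat :=
  match t with
  | Var n => Cantor.to_nat (0, n)
  | TZero => Cantor.to_nat (1, 0)
  | TOne => Cantor.to_nat (2, 0)
  | TAdd a b => Cantor.to_nat (3, Cantor.to_nat (encode a, encode b))
  | TMul a b => Cantor.to_nat (4, Cantor.to_nat (encode a, encode b))
  | TNeg a => Cantor.to_nat (5, encode a)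
  | TInv a => Cantor.to_nat (6, encode a)
  | TSgn a => Cantor.to_nat (7, encode a)
  | TSqrt a => Cantor.to_nat (8, encode a)
  end.

Fixpoint depth (t : term) : nat :=
  match t with
  | TAdd a b | TMul a b => S (max (depth a) (depth b))
  | TNeg a | TInv a | TSgn a | TSqrt a => S (depth a)
  | _ => 0
  end.

Lemma decode_encode t fuel : depth t < fuel -> decode fuel (encode t) = t.
Proof.
  revert fuel. induction t; intros fuel Hk; destruct fuel as [|fuel]; try (simpl in Hk; lia);
  cbn [decode encode]; rewrite Cantor.cancel_of_to;
  try (destruct (Cantor.of_nat _); reflexivity);
  try (rewrite Cantor.cancel_of_to; simpl in Hk;
       rewrite IHt1, IHt2 by lia; reflexivity);
  try (destruct (Cantor.of_nat _); simpl in Hk; rewrite IHt by lia; reflexivity).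
Qed.

Definition enum_term (n : nat) : term :=
  let (fuel, c) := Cantor.of_nat n in decode fuel c.

Lemma enum_term_surj t : exists n, enum_term n = t.
Proof.
  exists (Cantor.to_nat (S (depth t), encode t)). unfold enum_term.
  rewrite Cantor.cancel_of_to. apply decode_encode. lia.
Qed.

Lemma enum_free_alg_surj x : exists n, free_pi (enum_term n) = x.
Proof.
  destruct (enum_term_surj (repr _ _ x)) as [n Hn]. exists n.
  rewrite Hn. apply pi_repr.
Qed.

Theorem mainTheorem1 (t u : term) :
  (forall A : mss_algebra, model_MSS_IL A -> sat_eq A t u) <->
  derivable MdSignsSqrt t u.
Proof.
  split; [|intros; eapply derivable_sound; eauto].
  intro Hsat. apply NNPP. intro Hnd.
  set (enum := fun n => free_pi (enum_term n)).
  set (d := add free_alg (free_pi t) (opp free_alg (free_pi u))).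
  assert (d_neq0 : d <> zero free_alg).
  { intro E. apply Hnd, free_pi_eq, (subr0_eq free_alg free_alg_axioms), E. }
  pose proof (congruence_chain_eq free_alg free_alg_axioms enum d) as HR.
  specialize (Hsat _ (chain_quot_model free_alg free_alg_axioms enum enum_free_alg_surj d)
                (fun n => pi _ _ (free_pi (Var n)))).
  rewrite !(eval_pi _ _ HR), !eval_free_alg_generic in Hsat.
  exact (chain_quot_separates free_alg free_alg_axioms enum d d_neq0 _ _ eq_refl Hsat).
Qed.
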